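(* Let $G=(V,A)$ be a minimally Eulerian digraph. Then $|A| \le \sqrt{2(|V|-1)}\,|V| + |V| - 1$.
   Context: Digraphs are simple. A connected digraph is Eulerian if every vertex has indegree equal to outdegree (equivalently, it has a closed walk using every arc exactly once). A digraph $G$ is minimally Eulerian if it is a connected Eulerian digraph that contains no proper connected Eulerian spanning subgraph (a subgraph on all vertices of $G$ with a proper subset of the arcs); equivalently, for every directed cycle $C$ of $G$, the digraph $(V, A\setminus A(C))$ is disconnected. *)

(* A simple digraph on a finite vertex type V is an
   irreflexive relation e : rel V; its arc set is {(u,v) | e u v}.
   (Antiparallel arcs are allowed; loops and parallel arcs are not.) *)
From mathcomp Require Import all_boot all_order all_algebra.
Set Implicit Arguments. Unset Strict Implicit. Unset Printing Implicit Defensive.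

Section Digraphs.
Variable V : finType.

Definition arcs (e : rel V) : {set V * V} := [set p | e p.1 p.2].

Definition connected_arcs (B : {set V * V}) : Prop :=
  0 < #|V| /\
  forall x y : V, connect (fun u v => ((u, v) \in B) || ((v, u) \in B)) x y.

Definition balanced_arcs (B : {set V * V}) : Prop :=
  forall v : V, #|[set p in B | p.1 == v]| = #|[set p in B | p.2 == v]|.

Definition eulerian_arcs (B : {set V * V}) : Prop :=
  connected_arcs B /\ balanced_arcs B.

Definition minimally_eulerian (e : rel V) : Prop :=
  irreflexive e /\ eulerian_arcs (arcs e) /\
  forall B : {set V * V}, B \proper arcs e -> ~ eulerian_arcs B.

End Digraphs.

From mathcomp Require Import all_boot all_order all_algebra.

(* Let T be a spanning tree of the underlying undirected graph, so |T| <= n - 1,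
   and let D = A \ T.  Removing a nonempty balanced arc set contained in D would
   leave a connected (it contains T) Eulerian spanning subgraph, so by minimality
   D contains no directed cycle and its vertices can be ranked so that every arc
   of D goes up.  Say an arc (u, w) of D jumps over j when
   rank u < rank j <= rank w.  Such arcs leave the cut {v | rank v < rank j};
   by balance the same number of arcs enter it, and those all lie in T, so there
   are at most n |T| jumps.  Two out-neighbours w, w' of u with rank w' <= rank w
   give the jump of (u, w) over w', whence outdeg(u)^2 <= 2 (jumps of arcs out of
   u), and Cauchy-Schwarz yields |D|^2 <= n * sum outdeg(u)^2 <= 2 n^2 (n - 1). *)

Set Implicit Arguments. Unset Strict Implicit. Unset Printing Implicit Defensive.

Lemma card_sepID (T : finType) (X : {set T}) (P Q : pred T) :
  #|[set x in X | P x]| = #|[set x in X | P x && Q x]| + #|[set x in X | P x && ~~ Q x]|.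
Proof.
rewrite -(cardsID [set x | Q x]); congr (_ + _); apply: eq_card => x;
  by rewrite !inE; case: (Q x); rewrite ?andbT ?andbF.
Qed.

Lemma card_sepD (T : finType) (A B : {set T}) (P : pred T) : B \subset A ->
  #|[set x in A :\: B | P x]| = #|[set x in A | P x]| - #|[set x in B | P x]|.
Proof.
move=> sBA; rewrite -cardsDS; last first.
  by apply/subsetP => x; rewrite !inE => /andP[/(subsetP sBA) -> ->].
apply: eq_card => x; rewrite !inE.
by case: (x \in B); case: (P x); rewrite ?andbF ?andbT.
Qed.

Lemma card_sep_fibers (T J : finType) (X : {set T}) (g : T -> J) (S : {pred J}) :
  #|[set x in X | g x \in S]| = \sum_(j in S) #|[set x in X | g x == j]|.
Proof.
rewrite -sum1dep_card (partition_big g (mem S)) /=; last by move=> x /andP[].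
apply: eq_bigr => j jS; rewrite -sum1dep_card; apply: eq_bigl => x.
by rewrite -andbA; case: eqP => [-> | _]; rewrite ?jS ?andbF.
Qed.

Lemma card_fibers (T J : finType) (X : {set T}) (g : T -> J) :
  #|X| = \sum_j #|[set x in X | g x == j]|.
Proof.
by rewrite -(card_sep_fibers X g predT); apply: eq_card => x; rewrite !inE andbT.
Qed.

Lemma sep_imset (aT rT : finType) (f : aT -> rT) (A : {set aT}) (P : pred rT) :
  [set y in f @: A | P y] = f @: [set x in A | P (f x)].
Proof.
apply/setP => y; rewrite inE; apply/andP/imsetP => [[/imsetP[x xA ->] Pfx] | [x]].
  by exists x; rewrite ?inE ?xA.
by rewrite inE => /andP[xA Pfx] ->; rewrite imset_f.
Qed.

Lemma leq_sqr_sum (I : finType) (a : I -> nat) :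
  (\sum_i a i) ^ 2 <= #|I| * \sum_i a i ^ 2.
Proof.
rewrite -(leq_pmul2l (isT : 0 < 2)).
have -> : 2 * (\sum_i a i) ^ 2 = \sum_i \sum_j 2 * (a i * a j).
  rewrite -mulnn big_distrl big_distrr /=; apply: eq_bigr => i _.
  by rewrite !big_distrr.
apply: (@leq_trans (\sum_i \sum_j (a i ^ 2 + a j ^ 2))).
  by apply: leq_sum => i _; apply: leq_sum => j _; apply: nat_Cauchy.
rewrite (eq_bigr (fun i => #|I| * a i ^ 2 + \sum_j a j ^ 2)); last first.
  by move=> i _; rewrite big_split /= sum_nat_const.
by rewrite big_split /= -big_distrr /= sum_nat_const mul2n -addnn.
Qed.

Lemma exists_imset_stable_subset (T : finType) (f : T -> T) (P : {set T}) :
  P != set0 -> f @: P \subset P ->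
  exists Q : {set T}, [/\ Q != set0, Q \subset P & f @: Q = Q].
Proof.
elim: {P}_.+1 {-2}P (ltnSn #|P|) => // k IH P ltPk P0 fP.
have [eqfP | nefP] := eqVneq (f @: P) P; first by exists P.
have ltfP : f @: P \proper P by rewrite properEneq nefP.
have [|||Q [Q0 sQ eQ]] := IH (f @: P).
- exact: leq_trans (proper_card ltfP) ltPk.
- by rewrite imset_eq0.
- exact: imsetS.
by exists Q; split => //; apply: subset_trans sQ fP.
Qed.

Section Digraphs.
Variable V : finType.
Implicit Types (A B D T : {set V * V}) (X U S : {set V}).

Definition adjacent B : rel V := fun u v => ((u, v) \in B) || ((v, u) \in B).

Lemma adjacent_sym B : symmetric (adjacent B).
Proof. by move=> u v; rewrite /adjacent orbC. Qed.

Lemma adjacentS B B' : B \subset B' -> subrel (adjacent B) (adjacent B').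
Proof. by move=> sBB' u v /orP[] /(subsetP sBB') uv; rewrite /adjacent uv ?orbT. Qed.

Lemma connect_adjacentS B B' :
  B \subset B' -> subrel (connect (adjacent B)) (connect (adjacent B')).
Proof. by move=> sBB'; apply: connect_sub => u v /(adjacentS sBB'); apply: connect1. Qed.

Lemma connected_crossing_arc A X : connected_arcs A -> X != set0 -> X != setT ->
  exists x w, [/\ x \in X, w \notin X & adjacent A x w].
Proof.
case=> _ connA /set0Pn[r rX] XT.
have /existsP[[x w] /and3P[xX wX xw]] :
    [exists p : V * V, [&& p.1 \in X, p.2 \notin X & adjacent A p.1 p.2]].
  apply: contraNT XT => /existsPn noCross; apply/eqP/setP => y.
  have closedX : closed (adjacent A) X.
    move=> u v uv; have := noCross (u, v); have := noCross (v, u).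
    by rewrite /= adjacent_sym uv; case: (u \in X); case: (v \in X).
  by rewrite inE -(closed_connect closedX (connA r y)) rX.
by exists x, w.
Qed.

Lemma connected_spanning_tree A : connected_arcs A ->
  exists T, [/\ T \subset A, #|T| <= #|V|.-1 & forall x y, connect (adjacent T) x y].
Proof.
move=> connA; have [V0 _] := connA; have /card_gt0P[r _] := V0.
have grow k : k < #|V| -> exists X T, [/\ #|X| = k.+1, T \subset A, #|T| <= k &
    forall v, v \in X -> connect (adjacent T) r v].
  elim: k => [_ | k IH ltkV].
    exists [set r], set0; rewrite cards1 sub0set cards0.
    by split=> // v /set1P ->; apply: connect0.
  have [X [T [cardX sTA cardT reachX]]] := IH (ltnW ltkV).
  have [||x [w [xX wX xw]]] := @connected_crossing_arc A X connA.
  - by rewrite -card_gt0 cardX.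
  - by apply: contraTneq ltkV => XT; rewrite -cardX XT cardsT ltnn.
  have [p pA pxw] : exists2 p, p \in A & adjacent [set p] x w.
    case/orP: xw => ?; [exists (x, w) | exists (w, x)];
      by rewrite // /adjacent !inE eqxx ?orbT.
  exists (w |: X), (p |: T); split.
  - by rewrite cardsU1 wX cardX.
  - by rewrite subUset sub1set pA sTA.
  - by rewrite (leq_trans (leq_card_setU _ _)) // cards1 add1n ltnS.
  have reachS := connect_adjacentS (subsetUr [set p] T).
  move=> v /setU1P[-> | vX]; last exact: reachS _ _ (reachX v vX).
  apply: connect_trans (reachS _ _ (reachX x xX)) (connect1 _).
  exact: adjacentS (subsetUl _ _) _ _ pxw.
have [|X [T [cardX sTA cardT reachX]]] := grow #|V|.-1; first by rewrite ltn_predL.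
have XT : X = setT by apply/eqP; rewrite eqEcard subsetT cardX prednK // max_card.
have reach v : connect (adjacent T) r v by apply: reachX; rewrite XT inE.
exists T; split=> // x y; apply: connect_trans (reach y).
by rewrite (sym_connect_sym (@adjacent_sym T)) reach.
Qed.

Lemma balanced_setD A B : B \subset A ->
  balanced_arcs A -> balanced_arcs B -> balanced_arcs (A :\: B).
Proof. by move=> sBA balA balB v; rewrite !card_sepD // balA balB. Qed.

Lemma minimal_eulerian_no_balanced_outside A T :
  eulerian_arcs A -> (forall B, B \proper A -> ~ eulerian_arcs B) ->
  T \subset A -> (forall x y, connect (adjacent T) x y) ->
  forall B, B \subset A :\: T -> B != set0 -> ~ balanced_arcs B.
Proof.
move=> [[V0 _] balA] minA sTA spanT B sBAT B0 balB.
have sBA : B \subset A := subset_trans sBAT (subsetDl A T).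
apply: (minA (A :\: B)); last split; last exact: balanced_setD.
  rewrite properEneq subsetDl andbT; apply: contra_neq B0 => eqAB.
  apply/setP => p; rewrite inE; apply/negP => pB.
  by have := subsetP sBA p pB; rewrite -eqAB inE pB.
split=> // x y; apply: connect_adjacentS (spanT x y).
rewrite subsetD sTA; rewrite subsetD in sBAT.
by case/andP: sBAT => _; rewrite disjoint_sym.
Qed.

Lemma balanced_imset_graph (f : V -> V) (Q : {set V}) : f @: Q = Q ->
  balanced_arcs [set (f z, z) | z in Q].
Proof.
move=> fQ w; have /imset_injP injf : #|f @: Q| == #|Q| by rewrite fQ.
have injg : injective (fun z => (f z, z)) by move=> z z' [_].
rewrite !sep_imset !card_imset //= -[in RHS]fQ sep_imset card_in_imset //.
by move=> z z'; rewrite !inE => /andP[zQ _] /andP[z'Q _]; apply: injf.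
Qed.

Lemma exists_source D : (forall B, B \subset D -> B != set0 -> ~ balanced_arcs B) ->
  forall U, U != set0 -> exists2 s, s \in U & forall u, u \in U -> (u, s) \notin D.
Proof.
move=> noBal U U0.
have [/exists_inP[s sU /forall_inP sourceS] | /exists_inPn noSource] :=
  boolP [exists s in U, [forall u in U, (u, s) \notin D]]; first by exists s.
pose f s := odflt s [pick u in U | (u, s) \in D].
have fP s : s \in U -> (f s \in U) && ((f s, s) \in D).
  move=> sU; rewrite /f; case: pickP => [u /andP[-> ->] // | noPred].
  have /forall_inPn[u uU] := noSource s sU.
  by rewrite negbK => usD; have := noPred u; rewrite uU usD.
have [|Q [Q0 sQU fQ]] := @exists_imset_stable_subset _ f U U0.
  by apply/subsetP => _ /imsetP[s sU ->]; case/andP: (fP s sU).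
case: (noBal _ _ _ (balanced_imset_graph fQ)); last by rewrite imset_eq0.
by apply/subsetP => _ /imsetP[z zQ ->]; case/andP: (fP z (subsetP sQU z zQ)).
Qed.

Lemma exists_topological_rank D :
  (forall U, U != set0 -> exists2 s, s \in U & forall u, u \in U -> (u, s) \notin D) ->
  exists rank : V -> nat, forall u w, (u, w) \in D -> rank u < rank w.
Proof.
move=> source.
suff rankU U : exists rank : V -> nat,
    forall u w, u \in U -> w \in U -> (u, w) \in D -> rank u < rank w.
  by have [rank rankP] := rankU setT; exists rank => u w; apply: rankP; rewrite inE.
elim: {U}_.+1 {-2}U (ltnSn #|U|) => // k IH U ltUk.
have [-> | U0] := eqVneq U set0; first by exists (fun _ => 0) => u w; rewrite inE.
have [s sU sourceS] := source U U0.
have [|rank rankP] := IH (U :\ s); first by move: ltUk; rewrite (cardsD1 s) sU.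
exists (fun v => if v == s then 0 else (rank v).+1) => u w uU wU uwD.
have [ws | nws] := eqVneq w s; first by move: (sourceS u uU); rewrite -ws uwD.
have [// | nus] := eqVneq u s.
by rewrite ltnS rankP // !inE ?nus ?nws.
Qed.

Lemma balanced_cut A S : balanced_arcs A ->
  #|[set p in A | (p.1 \in S) && (p.2 \notin S)]| =
  #|[set p in A | (p.1 \notin S) && (p.2 \in S)]|.
Proof.
move=> balA.
have degS : #|[set p in A | p.1 \in S]| = #|[set p in A | p.2 \in S]|.
  by rewrite !card_sep_fibers; apply: eq_bigr => v _; apply: balA.
move: degS; rewrite (card_sepID A (fun p => p.1 \in S) (fun p => p.2 \in S)).
rewrite (card_sepID A (fun p => p.2 \in S) (fun p => p.1 \in S)) /=.
have inner : #|[set p in A | (p.2 \in S) && (p.1 \in S)]| =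
             #|[set p in A | (p.1 \in S) && (p.2 \in S)]|.
  by apply: eq_card => p; rewrite !inE [(p.2 \in S) && _]andbC.
by rewrite inner => /addnI ->; apply: eq_card => p; rewrite !inE [(p.2 \in S) && _]andbC.
Qed.

Section ForwardArcs.
Variables (A T : {set V * V}) (rank : V -> nat).
Hypothesis balA : balanced_arcs A.
Hypothesis forward : forall u w, (u, w) \in A :\: T -> rank u < rank w.

Definition jumps : {set (V * V) * V} :=
  [set x | (x.1 \in A :\: T) && (rank x.1.1 < rank x.2 <= rank x.1.2)].

Definition out_nbrs u : {set V} := [set w | (u, w) \in A :\: T].

Lemma card_jumps_over j : #|[set x in jumps | x.2 == j]| <= #|T|.
Proof.
pose S := [set v | rank v < rank j].
apply: (@leq_trans #|[set p in A | (p.1 \in S) && (p.2 \notin S)]|).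
  rewrite -(@card_in_imset _ _ fst); last first.
    move=> [p i] [q k]; rewrite !inE /= => /andP[_ /eqP ij] /andP[_ /eqP kj] /= ->.
    by rewrite ij kj.
  apply/subset_leq_card/subsetP => _ /imsetP[[p i] pi ->]; move: pi; rewrite !inE /=.
  by case/andP=> /and3P[/andP[_ ->] ltp1i leip2] /eqP <-; rewrite ltp1i -leqNgt.
rewrite balanced_cut //; apply/subset_leq_card/subsetP => p; rewrite !inE -leqNgt.
case/and3P=> pA lejp1 ltp2j; apply: contraLR lejp1 => pT; rewrite -ltnNge.
by apply: leq_trans (forward _) (ltnW ltp2j); rewrite -surjective_pairing inE pT.
Qed.

Lemma sqr_card_out_nbrs u : #|out_nbrs u| ^ 2 <= 2 * #|[set x in jumps | x.1.1 == u]|.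
Proof.
set N := out_nbrs u.
pose ordered := [set q in setX N N | rank q.2 <= rank q.1].
have coverNN : setX N N \subset ordered :|: [set (q.2, q.1) | q in ordered].
  apply/subsetP => -[w w'] ww'; rewrite in_setU.
  have [le | /ltnW le] := leqP (rank w') (rank w); first by rewrite inE ww' le.
  apply/orP; right; apply/imsetP; exists (w', w) => //; rewrite !inE /= le andbT.
  by move: ww'; rewrite !inE andbC.
have ordered_jumps : #|ordered| <= #|[set x in jumps | x.1.1 == u]|.
  rewrite -(card_imset _ (f := fun q : V * V => ((u, q.1), q.2))); last first.
    by move=> [a b] [c d] [-> ->].
  apply/subset_leq_card/subsetP => _ /imsetP[[w w'] ww' ->]; move: ww'.
  rewrite !in_set /= => /andP[/and3P[uwD uw'T uw'A] le].
  by rewrite uwD le eqxx !andbT forward // inE uw'T.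
rewrite -mulnn -cardsX mul2n -addnn.
apply: leq_trans (subset_leq_card coverNN) _.
apply: leq_trans (leq_card_setU _ _) _.
by rewrite leq_add // (leq_trans (leq_imset_card _ _)).
Qed.

Lemma card_forward_arcs : #|A :\: T| = \sum_u #|out_nbrs u|.
Proof.
rewrite (card_fibers _ fst); apply: eq_bigr => u _.
have -> : [set p in A :\: T | p.1 == u] = pair u @: out_nbrs u.
  apply/setP => -[v w]; rewrite inE /=.
  apply/andP/imsetP => [[vwD /eqP <-] | [w' uw' [-> ->]]].
    by exists w; rewrite // !inE in vwD *.
  by rewrite /out_nbrs in_set in uw'.
by rewrite card_imset // => w w' [].
Qed.

Lemma card_jumps : #|jumps| <= #|V| * #|T|.
Proof.
rewrite (card_fibers _ snd) -sum_nat_const.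
by apply: leq_sum => j _; apply: card_jumps_over.
Qed.

Lemma sqr_card_forward_arcs : #|A :\: T| ^ 2 <= 2 * (#|V| * (#|V| * #|T|)).
Proof.
rewrite card_forward_arcs (leq_trans (leq_sqr_sum _)) // mulnCA leq_mul2l.
apply/orP; right; apply: (@leq_trans (\sum_u 2 * #|[set x in jumps | x.1.1 == u]|)).
  by apply: leq_sum => u _; apply: sqr_card_out_nbrs.
by rewrite -big_distrr -(card_fibers _ (fun x => x.1.1)) leq_mul2l card_jumps orbT.
Qed.

End ForwardArcs.

End Digraphs.

Import Order.TTheory GRing.Theory Num.Theory.
Local Open Scope ring_scope.

Lemma natr_le_sqrt_bound (R : rcfType) (n d t : nat) : (0 < n)%N -> (t <= n.-1)%N ->
  (d ^ 2 <= 2 * (n * (n * t)))%N ->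
  ((d + t)%:R : R) <= Num.sqrt (2 * (n%:R - 1)) * n%:R + n%:R - 1.
Proof.
move=> n0 tn dnt.
have dn : (d ^ 2 <= 2 * (n.-1 * n ^ 2))%N.
  by rewrite (leq_trans dnt) // leq_mul2l mulnA mulnn (mulnC n.-1) leq_mul2l tn !orbT.
have nR : n%:R - 1 = n.-1%:R :> R by rewrite -{1}(prednK n0) -addn1 natrD addrK.
rewrite natrD -addrA nR lerD ?ler_nat //.
have -> : d%:R = Num.sqrt (d ^ 2)%N%:R :> R by rewrite natrX sqrtr_sqr ger0_norm.
have -> : Num.sqrt (2 * n.-1%:R) * n%:R = Num.sqrt (2 * (n.-1 * n ^ 2))%N%:R :> R.
  by rewrite !natrM -expr2 mulrA [RHS]sqrtrM ?sqrtr_sqr ?ger0_norm // mulr_ge0 ?ler0n.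
by rewrite ler_wsqrtr // ler_nat.
Qed.

Theorem proposition1p3 (R : rcfType) (V : finType) (e : rel V) :
  minimally_eulerian e ->
  (#|arcs e|%:R : R) <=
    Num.sqrt (2 * (#|V|%:R - 1)) * #|V|%:R + #|V|%:R - 1.
Proof.
case=> _ [eulA minA]; set A := arcs e.
have [T [sTA cardT spanT]] := connected_spanning_tree eulA.1.
have noBal := minimal_eulerian_no_balanced_outside eulA minA sTA spanT.
have [rank forward] := exists_topological_rank (exists_source noBal).
have cardA : #|A| = (#|A :\: T| + #|T|)%N by rewrite cardsDS // subnK // subset_leq_card.
rewrite cardA; apply: natr_le_sqrt_bound eulA.1.1 cardT _.
exact: sqr_card_forward_arcs eulA.2 forward.
Qed.
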